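(* Let $p$ be an odd prime and $q\ge1$ an integer. Let $m,k$ be nonnegative integers and $r,s$ integers with $r\ge s\ge q$ and $kp^s\le mp^r$. Let $e_0=v_p\!\left(\binom{mp^r}{kp^s}\right)$ be the exponent of $p$ dividing $\binom{mp^r}{kp^s}$. Then $$\frac{1}{p^{e_0}}\binom{mp^r}{kp^s}\equiv\frac{1}{p^{e_0}}\binom{mp^{r-1}}{kp^{s-1}}\pmod{p^q}$$ (as a congruence in the $p$-adic integers).
   Context: $v_p$ denotes the $p$-adic valuation. *)

From mathcomp Require Import all_boot.

(** Split off the multiples of [p] among the factors of the falling factorials:
    with [a = c + b], the identity
    [C(pa, pb) * U(0) = C(a, b) * U(pc)] holds, where [U(x)] is the product of the
    [x + j] over [1 <= j <= pb] with [p] not dividing [j].  Both [U(0)] and [U(pc)]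
    are prime to [p], and they agree modulo [p^q] as soon as [p^q] divides [pc].
    Hence the [p]-free parts of [C(pa, pb)] and [C(a, b)] agree modulo [p^q]. *)

From mathcomp Require Import all_boot ring.

Set Implicit Arguments.
Unset Strict Implicit.
Unset Printing Implicit Defensive.

Lemma mul_bin_shift n k t :
  'C(n + t, k + t) * \prod_(i < t) (k + i.+1) = 'C(n, k) * \prod_(i < t) (n + i.+1).
Proof.
elim: t => [|t IHt]; first by rewrite !addn0 !big_ord0.
have step := mul_bin_diag (n + t).+1 (k + t).
rewrite /= in step.
rewrite !big_ord_recr /= mulnA !addnS mulnAC [_ * (k + t).+1]mulnC -step.
by rewrite -mulnA IHt mulnC -mulnA.
Qed.

Lemma eqn_modMr_coprime d a b c :
  coprime d c -> (a * c == b * c %[mod d]) = (a == b %[mod d]).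
Proof.
move=> dc; wlog le_ba : a b / b <= a.
  move=> sym; case: (leqP b a) => [|/ltnW]; first exact: sym.
  by rewrite eq_sym [(a == b %[mod d])]eq_sym; apply: sym.
by rewrite !eqn_mod_dvd ?leq_mul2r ?le_ba ?orbT // -mulnBl Gauss_dvdl.
Qed.

(** [unit_prod p x b] is the product of the [x + j] over [1 <= j <= p * b] with
    [p] not dividing [j], written [j = p * u + i.+1] with [i < p.-1]. *)
Definition unit_prod p x b := \prod_(u < b) \prod_(i < p.-1) (x + (p * u + i.+1)).

Lemma unit_prodS p x b :
  unit_prod p x b.+1 = unit_prod p x b * \prod_(i < p.-1) (x + (p * b + i.+1)).
Proof. by rewrite /unit_prod big_ord_recr. Qed.

Lemma unit_prod_mod p x b d : d %| x -> unit_prod p x b = unit_prod p 0 b %[mod d].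
Proof.
move=> dx; have modM m1 n1 m2 n2 : m1 = n1 %[mod d] -> m2 = n2 %[mod d] ->
    m1 * m2 = n1 * n2 %[mod d].
  by move=> e1 e2; rewrite -modnMm e1 e2 modnMm.
apply: (big_ind2 (fun m n => m = n %[mod d])) => [//||u _]; first exact: modM.
apply: (big_ind2 (fun m n => m = n %[mod d])) => [//||i _]; first exact: modM.
by rewrite add0n -modnDml (eqP dx).
Qed.

Lemma coprime_unit_prod p x b : prime p -> p %| x -> coprime p (unit_prod p x b).
Proof.
move=> p_pr px; apply: (big_ind (coprime p)) => [|m n|u _]; rewrite ?coprimen1 //.
  by rewrite coprimeMr => -> ->.
apply: (big_ind (coprime p)) => [|m n|i _]; rewrite ?coprimen1 //.
  by rewrite coprimeMr => -> ->.
rewrite -coprime_modr -modnDml (eqP px) add0n mulnC -modnDml modnMl add0n.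
have lt_ip : i.+1 < p by rewrite -[p in _ < p](prednK (prime_gt0 p_pr)) ltnS.
by rewrite modn_small // prime_coprime // gtnNdvd.
Qed.

Lemma bin_pmul_unit_prod p c b : 0 < p ->
  'C(p * (c + b), p * b) * unit_prod p 0 b = 'C(c + b, b) * unit_prod p (p * c) b.
Proof.
case: p => // p _; elim: b => [|b IHb].
  by rewrite /unit_prod !big_ord0 !muln0 !addn0 !bin0.
(* Each of the two falling factorials gains [p] factors: [p - 1] of them are prime
   to [p] and enter [unit_prod]; the last one is the new multiple of [p]. *)
have block := mul_bin_shift (p.+1 * (c + b)) (p.+1 * b) p.+1.
rewrite !big_ord_recr /= in block.
have diag := mul_bin_diag (c + b).+1 b; rewrite /= in diag.
rewrite !unit_prodS; under eq_bigr do rewrite add0n.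
under [X in _ = _ * (_ * X)]eq_bigr do rewrite addnA -mulnDr.
set P0 := \prod_(i < p) _ in block *; set P1 := \prod_(i < p) _ in block *.
rewrite addnS; apply/eqP; rewrite -(eqn_pmul2r (_ : 0 < p.+1 * b.+1)) ?muln_gt0 //.
apply/eqP; transitivity ('C(p.+1 * (c + b) + p.+1, p.+1 * b + p.+1)
                          * (P0 * (p.+1 * b + p.+1)) * unit_prod p.+1 0 b).
  by rewrite -!mulnSr; ring.
rewrite block; transitivity ('C(p.+1 * (c + b), p.+1 * b) * unit_prod p.+1 0 b
                             * P1 * p.+1 * (c + b).+1).
  by rewrite -mulnSr; ring.
by rewrite IHb mulnC !mulnA diag; ring.
Qed.

Lemma pfree_part_congr p q n1 n2 u1 u2 : prime p ->
  coprime p u1 -> coprime p u2 -> n1 * u1 = n2 * u2 -> u1 = u2 %[mod p ^ q] ->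
  n1 %/ p ^ logn p n1 = n2 %/ p ^ logn p n1 %[mod p ^ q].
Proof.
move=> p_pr p_u1 p_u2 eq_n eq_u.
have logn_eq : logn p n2 = logn p n1.
  by rewrite -(logn_Gauss n1 p_u1) -(logn_Gauss n2 p_u2) [u1 * _]mulnC [u2 * _]mulnC eq_n.
set e := logn p n1 in logn_eq *.
have := divnK (pfactor_dvdnn p n2); have := divnK (pfactor_dvdnn p n1).
rewrite logn_eq -/e; set v1 := n1 %/ p ^ e; set v2 := n2 %/ p ^ e => def_n1 def_n2.
have eq_v : v1 * u1 = v2 * u2.
  apply/eqP; rewrite -(eqn_pmul2r (_ : 0 < p ^ e)) ?expn_gt0 ?prime_gt0 //.
  by rewrite mulnAC def_n1 eq_n -def_n2 mulnAC.
apply/eqP; rewrite -(eqn_modMr_coprime _ _ (_ : coprime (p ^ q) u1)) ?coprimeXl //.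
by rewrite eq_v; apply/eqP; rewrite -modnMmr -eq_u modnMmr.
Qed.

Theorem corollary15 (p q m k r s : nat) :
  prime p -> odd p -> 1 <= q -> q <= s -> s <= r ->
  k * p ^ s <= m * p ^ r ->
  let e0 := logn p 'C(m * p ^ r, k * p ^ s) in
  'C(m * p ^ r, k * p ^ s) %/ p ^ e0 =
    'C(m * p ^ r.-1, k * p ^ s.-1) %/ p ^ e0 %[mod p ^ q].
Proof.
move=> p_pr _ q_gt0 le_qs le_sr le_ks e0; rewrite {}/e0.
have s_gt0 : 0 < s := leq_trans q_gt0 le_qs.
have r_gt0 : 0 < r := leq_trans s_gt0 le_sr.
set a := m * p ^ r.-1; set b := k * p ^ s.-1.
have def_pa : m * p ^ r = p * a by rewrite /a -{1}(prednK r_gt0) expnS mulnCA.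
have def_pb : k * p ^ s = p * b by rewrite /b -{1}(prednK s_gt0) expnS mulnCA.
rewrite def_pa def_pb in le_ks *.
have le_ba : b <= a by rewrite -(leq_pmul2l (prime_gt0 p_pr)).
have dvd_c : p ^ s.-1 %| a - b.
  by rewrite dvdn_sub ?dvdn_mull // dvdn_exp2l // -!subn1 leq_sub2r.
have dvd_pc : p ^ q %| p * (a - b).
  apply: dvdn_trans (dvdn_exp2l p le_qs) _.
  by rewrite -{1}(prednK s_gt0) expnS dvdn_pmul2l ?prime_gt0.
rewrite -[a](subnK le_ba); set c := a - b in dvd_pc *.
apply: (pfree_part_congr p_pr _ _ (bin_pmul_unit_prod c b (prime_gt0 p_pr))).
- exact: coprime_unit_prod.
- by rewrite coprime_unit_prod ?dvdn_mulr.
- exact/esym/unit_prod_mod.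
Qed.
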